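(* Let $\mathcal{K}^2_*$ denote the set of strictly convex bodies in $\mathbb{R}^2$, with the Hausdorff metric. The map $K\mapsto \mathcal{M}_K$ from $\mathcal{K}^2_*$ to the space of nonempty compact subsets of $\mathbb{R}^2$ (with the Hausdorff metric) is continuous.
   Context: A convex body is a nonempty compact convex subset of $\mathbb{R}^2$; it is strictly convex if its boundary contains no nondegenerate segment. For $K$ strictly convex and $u\in\mathbb{S}^1$, $x_K(u)$ denotes the unique point of $K$ on its supporting line with outer unit normal $u$, and $m_K(u)=\frac12[x_K(u)+x_K(-u)]$. The middle hedgehog is $\mathcal{M}_K=\{m_K(u): u\in\mathbb{S}^1\}$. *)

From Stdlib Require Import Reals.
Open Scope R_scope.

Definition pt := (R * R)%type.
Definition pset := pt -> Prop.

Definition padd (p q : pt) : pt := (fst p + fst q, snd p + snd q).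
Definition pscale (a : R) (p : pt) : pt := (a * fst p, a * snd p).
Definition popp (p : pt) : pt := (- fst p, - snd p).
Definition dot (p q : pt) : R := fst p * fst q + snd p * snd q.
Definition dist2 (p q : pt) : R :=
  sqrt ((fst p - fst q)^2 + (snd p - snd q)^2).

Definition unit_vec (u : pt) : Prop := (fst u)^2 + (snd u)^2 = 1.

Definition seq_conv (s : nat -> pt) (l : pt) : Prop :=
  forall eps, eps > 0 -> exists N, forall n, (n >= N)%nat -> dist2 (s n) l < eps.

(* compactness (sequential compactness, equivalent to compactness in metric spaces) *)
Definition compact2 (A : pset) : Prop :=
  forall s : nat -> pt, (forall n, A (s n)) ->
    exists (phi : nat -> nat) (l : pt),
      (forall n m, (n < m)%nat -> (phi n < phi m)%nat) /\
      A l /\ seq_conv (fun n => s (phi n)) l.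

Definition nonempty (A : pset) : Prop := exists p, A p.

Definition convex (A : pset) : Prop :=
  forall p q t, A p -> A q -> 0 <= t <= 1 ->
    A (padd (pscale (1 - t) p) (pscale t q)).

Definition convex_body (K : pset) : Prop := nonempty K /\ compact2 K /\ convex K.

Definition boundary (K : pset) (x : pt) : Prop :=
  K x /\ forall e, e > 0 -> exists y, dist2 x y < e /\ ~ K y.

Definition strictly_convex_body (K : pset) : Prop :=
  convex_body K /\
  ~ (exists p q, p <> q /\
       forall t, 0 <= t <= 1 -> boundary K (padd (pscale (1 - t) p) (pscale t q))).

Definition support_point (K : pset) (u x : pt) : Prop :=
  K x /\ forall y, K y -> dot y u <= dot x u.

(* middle hedgehog M_K = { (x_K(u) + x_K(-u))/2 : u in S^1 }.
   For strictly convex K the support points are unique, so this is exactly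
   { m_K(u) : u in S^1 }. *)
Definition middle_hedgehog (K : pset) : pset :=
  fun m => exists u x y, unit_vec u /\ support_point K u x /\
      support_point K (popp u) y /\ m = pscale (1/2) (padd x y).

(* Hausdorff distance between nonempty compact2 sets is <= r
   (the infimum distance to a compact2 set is attained). *)
Definition hausdorff_le (A B : pset) (r : R) : Prop :=
  (forall a, A a -> exists b, B b /\ dist2 a b <= r) /\
  (forall b, B b -> exists a, A a /\ dist2 a b <= r).

(* Support points of a strictly convex body are unique.  Hence, by compactness,
   the support point x_L(u) of a body L close to K is close to x_K(u), uniformly
   in u: otherwise a sequence of counterexamples L_n -> K would have a
   subsequence along which u_n, x_K(u_n) and points of K near x_{L_n}(u_n)
   converge, and both limits would be support points of K in the same
   direction.  A point of M_L is the midpoint of x_L(u) and x_L(-u), so it is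
   as close to the corresponding point of M_K.  Compactness of M_K follows since
   limits of support points are support points. *)

From Stdlib Require Import Reals Rgeom Lra Lia Psatz Classical ClassicalEpsilon.
Open Scope R_scope.

Definition strict_incr (phi : nat -> nat) : Prop :=
  forall n m, (n < m)%nat -> (phi n < phi m)%nat.

Lemma strict_incr_ge phi : strict_incr phi -> forall n, (n <= phi n)%nat.
Proof. intros Hphi n; induction n; [lia|]. specialize (Hphi n (S n)); lia. Qed.

Lemma strict_incr_comp phi psi :
  strict_incr phi -> strict_incr psi -> strict_incr (fun n => phi (psi n)).
Proof. intros Hphi Hpsi n m Hnm. apply Hphi, Hpsi, Hnm. Qed.

Lemma strict_incr_succ phi : (forall n, (phi n < phi (S n))%nat) -> strict_incr phi.
Proof.
  intros Hphi n m Hnm; induction m as [|m IHm]; [lia|].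
  destruct (Nat.eq_dec n m) as [->|Hne]; [apply Hphi|].
  specialize (IHm ltac:(lia)); specialize (Hphi m); lia.
Qed.

Lemma Un_cv_subseq u l phi : strict_incr phi -> Un_cv u l -> Un_cv (fun n => u (phi n)) l.
Proof.
  intros Hphi Hu eps Heps; destruct (Hu eps Heps) as [N HN]; exists N.
  intros n Hn; apply HN; pose proof (strict_incr_ge phi Hphi n); lia.
Qed.

Lemma Un_cv_const c : Un_cv (fun _ => c) c.
Proof. intros eps Heps; exists 0%nat; intros; unfold Rdist; rewrite Rminus_diag, Rabs_R0; lra. Qed.

Lemma Un_cv_inv_succ : Un_cv (fun n => / (INR n + 1)) 0.
Proof.
  apply cv_infty_cv_0; intros M; destruct (INR_unbounded M) as [N HN]; exists N.
  intros n Hn; apply le_INR in Hn; lra.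
Qed.

Lemma Un_cv_pow2 u l : Un_cv u l -> Un_cv (fun n => u n ^ 2) (l ^ 2).
Proof.
  intros Hu eps Heps; destruct (CV_mult _ _ _ _ Hu Hu eps Heps) as [N HN]; exists N.
  intros n Hn; specialize (HN n Hn); unfold Rdist in *.
  replace (u n ^ 2 - l ^ 2) with (u n * u n - l * l) by ring; exact HN.
Qed.

Lemma inv_succ_pos n : 0 < / (INR n + 1).
Proof. apply Rinv_0_lt_compat; pose proof (pos_INR n); lra. Qed.

Lemma Rabs_le_inv x a : Rabs x <= a -> -a <= x <= a.
Proof. unfold Rabs; destruct (Rcase_abs x); lra. Qed.

Lemma bounded_Un_cv_subseq (u : nat -> R) M : (forall n, Rabs (u n) <= M) ->
  exists phi l, strict_incr phi /\ Un_cv (fun n => u (phi n)) l.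
Proof.
  intros Hbound.
  destruct (Bolzano_Weierstrass u (fun c => -M <= c <= M) (compact_P3 (-M) M)) as [l Hl].
  { intros n; apply Rabs_le_inv, Hbound. }
  assert (Hnear : forall N, exists p, (N <= p)%nat /\ Rabs (u p - l) < / (INR N + 1)).
  { intros N; apply (Hl (disc l (mkposreal _ (inv_succ_pos N))) N).
    exists (mkposreal _ (inv_succ_pos N)); intros x Hx; exact Hx. }
  destruct (choice _ Hnear) as [g Hg].
  set (phi := fix phi n := match n with O => g O | S m => g (S (phi m)) end).
  assert (Hphi : strict_incr phi).
  { apply strict_incr_succ; intros n; simpl; specialize (Hg (S (phi n))); lia. }
  assert (Hclose : forall n, Rabs (u (phi n) - l) <= / (INR n + 1)).
  { intros [|n]; [left; apply Hg|].
    apply Rle_trans with (/ (INR (S (phi n)) + 1)); [left; apply Hg|].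
    apply Rinv_le_contravar; [pose proof (pos_INR (S n)); lra|].
    apply Rplus_le_compat_r, le_INR; pose proof (strict_incr_ge phi Hphi n); lia. }
  exists phi, l; split; [exact Hphi|].
  intros eps Heps; destruct (Un_cv_inv_succ eps Heps) as [N HN]; exists N.
  intros n Hn; specialize (HN n Hn); unfold Rdist in *.
  rewrite Rminus_0_r, Rabs_right in HN by (left; apply inv_succ_pos).
  eapply Rle_lt_trans; [apply Hclose|exact HN].
Qed.

Lemma dist2_euc p q : dist2 p q = dist_euc (fst p) (snd p) (fst q) (snd q).
Proof. unfold dist2, dist_euc, Rsqr; f_equal; ring. Qed.

Lemma dist2_sym p q : dist2 p q = dist2 q p.
Proof. rewrite !dist2_euc; apply distance_symm. Qed.

Lemma dist2_refl p : dist2 p p = 0.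
Proof. rewrite dist2_euc; apply distance_refl. Qed.

Lemma dist2_triangle p q r : dist2 p r <= dist2 p q + dist2 q r.
Proof. rewrite !dist2_euc; apply triangle. Qed.

Lemma dist2_popp p q : dist2 (popp p) (popp q) = dist2 p q.
Proof. unfold dist2, popp; cbn [fst snd]; f_equal; ring. Qed.

Lemma Rabs_le_sqrt x a : x * x <= a -> Rabs x <= sqrt a.
Proof. intros H; rewrite <- sqrt_Rsqr_abs; apply sqrt_le_1_alt; exact H. Qed.

Lemma Rabs_fst_le_dist2 p q : Rabs (fst p - fst q) <= dist2 p q.
Proof. apply Rabs_le_sqrt; pose proof (pow2_ge_0 (snd p - snd q)); nra. Qed.

Lemma Rabs_snd_le_dist2 p q : Rabs (snd p - snd q) <= dist2 p q.
Proof. apply Rabs_le_sqrt; pose proof (pow2_ge_0 (fst p - fst q)); nra. Qed.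

Lemma padd_comm p q : padd p q = padd q p.
Proof. unfold padd; f_equal; ring. Qed.

Lemma dist2_midpoint_le x y x' y' :
  dist2 (pscale (1/2) (padd x y)) (pscale (1/2) (padd x' y'))
  <= (dist2 x x' + dist2 y y') / 2.
Proof.
  assert (Hhalf : forall a b c, dist2 (pscale (1/2) (padd a c)) (pscale (1/2) (padd b c))
                                = dist2 a b / 2).
  { intros a b c; unfold dist2, pscale, padd; cbn [fst snd].
    replace ((1 / 2 * (fst a + fst c) - 1 / 2 * (fst b + fst c)) ^ 2 +
             (1 / 2 * (snd a + snd c) - 1 / 2 * (snd b + snd c)) ^ 2)
      with ((/ 2) ^ 2 * ((fst a - fst b) ^ 2 + (snd a - snd b) ^ 2)) by field.
    rewrite sqrt_mult_alt, sqrt_pow2 by lra; lra. }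
  eapply Rle_trans; [apply (dist2_triangle _ (pscale (1/2) (padd x' y)))|].
  rewrite Hhalf, (padd_comm x' y), (padd_comm x' y'), Hhalf; lra.
Qed.

Lemma dot_lipschitz p q u : unit_vec u -> Rabs (dot p u - dot q u) <= dist2 p q.
Proof.
  unfold unit_vec, dot; intros Hu; apply Rabs_le_sqrt.
  set (a := fst p - fst q); set (b := snd p - snd q).
  replace (fst p * fst u + snd p * snd u - (fst q * fst u + snd q * snd u))
    with (a * fst u + b * snd u) by (unfold a, b; ring).
  (* Cauchy-Schwarz through Lagrange's identity *)
  assert (Hlag : (a * fst u + b * snd u) ^ 2 + (a * snd u - b * fst u) ^ 2
                 = (a ^ 2 + b ^ 2) * (fst u ^ 2 + snd u ^ 2)) by ring.
  rewrite Hu in Hlag; pose proof (pow2_ge_0 (a * snd u - b * fst u)); nra.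
Qed.

Lemma seq_conv_fst s l : seq_conv s l -> Un_cv (fun n => fst (s n)) (fst l).
Proof.
  intros Hs eps Heps; destruct (Hs eps Heps) as [N HN]; exists N; intros n Hn.
  eapply Rle_lt_trans; [apply Rabs_fst_le_dist2|apply HN, Hn].
Qed.

Lemma seq_conv_snd s l : seq_conv s l -> Un_cv (fun n => snd (s n)) (snd l).
Proof.
  intros Hs eps Heps; destruct (Hs eps Heps) as [N HN]; exists N; intros n Hn.
  eapply Rle_lt_trans; [apply Rabs_snd_le_dist2|apply HN, Hn].
Qed.

Lemma seq_conv_of_components s l :
  Un_cv (fun n => fst (s n)) (fst l) -> Un_cv (fun n => snd (s n)) (snd l) -> seq_conv s l.
Proof.
  intros H1 H2 eps Heps.
  destruct (H1 (eps / 2) ltac:(lra)) as [N1 HN1]; destruct (H2 (eps / 2) ltac:(lra)) as [N2 HN2].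
  exists (max N1 N2); intros n Hn.
  specialize (HN1 n ltac:(lia)); specialize (HN2 n ltac:(lia)); unfold Rdist in *.
  unfold dist2; set (a := fst (s n) - fst l) in *; set (b := snd (s n) - snd l) in *.
  apply Rle_lt_trans with (Rabs a + Rabs b); [|lra].
  pose proof (Rabs_pos a); pose proof (Rabs_pos b).
  rewrite <- (sqrt_pow2 (Rabs a + Rabs b)) by lra; apply sqrt_le_1_alt.
  rewrite <- (pow2_abs a), <- (pow2_abs b); nra.
Qed.

Lemma seq_conv_const p : seq_conv (fun _ => p) p.
Proof. intros eps Heps; exists 0%nat; intros; rewrite dist2_refl; exact Heps. Qed.

Lemma seq_conv_subseq s l phi :
  strict_incr phi -> seq_conv s l -> seq_conv (fun n => s (phi n)) l.
Proof.
  intros Hphi Hs eps Heps; destruct (Hs eps Heps) as [N HN]; exists N.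
  intros n Hn; apply HN; pose proof (strict_incr_ge phi Hphi n); lia.
Qed.

Lemma seq_conv_popp s l : seq_conv s l -> seq_conv (fun n => popp (s n)) (popp l).
Proof.
  intros Hs eps Heps; destruct (Hs eps Heps) as [N HN]; exists N; intros n Hn.
  rewrite dist2_popp; apply HN, Hn.
Qed.

Lemma seq_conv_midpoint a b la lb : seq_conv a la -> seq_conv b lb ->
  seq_conv (fun n => pscale (1/2) (padd (a n) (b n))) (pscale (1/2) (padd la lb)).
Proof.
  intros Ha Hb eps Heps.
  destruct (Ha eps Heps) as [N1 HN1]; destruct (Hb eps Heps) as [N2 HN2].
  exists (max N1 N2); intros n Hn.
  specialize (HN1 n ltac:(lia)); specialize (HN2 n ltac:(lia)).
  eapply Rle_lt_trans; [apply dist2_midpoint_le|lra].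
Qed.

Lemma seq_conv_dot a b la lb : seq_conv a la -> seq_conv b lb ->
  Un_cv (fun n => dot (a n) (b n)) (dot la lb).
Proof.
  intros Ha Hb; unfold dot.
  apply CV_plus; apply CV_mult; auto using seq_conv_fst, seq_conv_snd.
Qed.

Lemma unit_vec_popp u : unit_vec u -> unit_vec (popp u).
Proof. unfold unit_vec, popp; cbn [fst snd]; intros Hu; rewrite <- Hu; ring. Qed.

Lemma compact2_unit_circle : compact2 unit_vec.
Proof.
  intros s Hs.
  assert (Hfst : forall n, Rabs (fst (s n)) <= 1).
  { intros n; specialize (Hs n); unfold unit_vec in Hs; apply Rabs_le.
    pose proof (pow2_ge_0 (snd (s n))); nra. }
  assert (Hsnd : forall n, Rabs (snd (s n)) <= 1).
  { intros n; specialize (Hs n); unfold unit_vec in Hs; apply Rabs_le.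
    pose proof (pow2_ge_0 (fst (s n))); nra. }
  destruct (bounded_Un_cv_subseq _ 1 Hfst) as [phi1 [l1 [Hphi1 Hl1]]].
  destruct (bounded_Un_cv_subseq (fun n => snd (s (phi1 n))) 1 (fun n => Hsnd (phi1 n)))
    as [phi2 [l2 [Hphi2 Hl2]]].
  exists (fun n => phi1 (phi2 n)), (l1, l2); split; [apply strict_incr_comp; auto|].
  assert (Hl1' : Un_cv (fun n => fst (s (phi1 (phi2 n)))) l1)
    by exact (Un_cv_subseq (fun n => fst (s (phi1 n))) l1 phi2 Hphi2 Hl1).
  split; [|apply seq_conv_of_components; assumption].
  unfold unit_vec; cbn [fst snd].
  apply (UL_sequence (fun n => fst (s (phi1 (phi2 n))) ^ 2 + snd (s (phi1 (phi2 n))) ^ 2)).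
  - apply CV_plus; apply Un_cv_pow2; assumption.
  - intros eps Heps; exists 0%nat; intros n _; rewrite (Hs _); unfold Rdist.
    rewrite Rminus_diag, Rabs_R0; exact Heps.
Qed.

Lemma compact2_subseq3 A B C (a b c : nat -> pt) :
  compact2 A -> compact2 B -> compact2 C ->
  (forall n, A (a n)) -> (forall n, B (b n)) -> (forall n, C (c n)) ->
  exists phi la lb lc, strict_incr phi /\ A la /\ B lb /\ C lc /\
    seq_conv (fun n => a (phi n)) la /\ seq_conv (fun n => b (phi n)) lb /\
    seq_conv (fun n => c (phi n)) lc.
Proof.
  intros HA HB HC Ha Hb Hc.
  destruct (HA a Ha) as [phi1 [la [Hphi1 [Ala Hla]]]].
  destruct (HB (fun n => b (phi1 n)) (fun n => Hb _)) as [phi2 [lb [Hphi2 [Blb Hlb]]]].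
  destruct (HC (fun n => c (phi1 (phi2 n))) (fun n => Hc _)) as [phi3 [lc [Hphi3 [Clc Hlc]]]].
  exists (fun n => phi1 (phi2 (phi3 n))), la, lb, lc.
  assert (Hphi23 : strict_incr (fun n => phi2 (phi3 n))) by (apply strict_incr_comp; auto).
  repeat split; auto.
  - apply strict_incr_comp; auto.
  - exact (seq_conv_subseq _ _ _ Hphi23 Hla).
  - exact (seq_conv_subseq _ _ _ Hphi3 Hlb).
Qed.

Lemma support_point_of_approx K us u ks k ds :
  seq_conv us u -> seq_conv ks k -> Un_cv ds 0 -> K k ->
  (forall n y, K y -> dot y (us n) <= dot (ks n) (us n) + ds n) ->
  support_point K u k.
Proof.
  intros Hu Hk Hd Kk Happrox; split; [exact Kk|]; intros y Ky.
  apply (@Rle_cv_lim (fun n => dot y (us n)) (fun n => dot (ks n) (us n) + ds n)).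
  - intros n; apply Happrox, Ky.
  - exact (seq_conv_dot _ _ _ _ (seq_conv_const y) Hu).
  - rewrite <- (Rplus_0_r (dot k u)); apply CV_plus; [apply seq_conv_dot|]; assumption.
Qed.

Lemma support_point_seq_limit K us u xs x :
  seq_conv us u -> seq_conv xs x -> K x ->
  (forall n, support_point K (us n) (xs n)) -> support_point K u x.
Proof.
  intros Hu Hx Kx Hs; apply (support_point_of_approx K us u xs x (fun _ => 0)); auto.
  - apply Un_cv_const.
  - intros n y Ky; rewrite Rplus_0_r; apply (Hs n), Ky.
Qed.

Lemma compact2_dot_bounded K u : compact2 K -> exists M, forall y, K y -> dot y u <= M.
Proof.
  intros HK; apply NNPP; intros Hunb.
  assert (Hbig : forall n : nat, exists y, K y /\ INR n < dot y u).
  { intros n; apply NNPP; intros Hn; apply Hunb; exists (INR n); intros y Ky.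
    apply Rnot_lt_le; intros Hlt; apply Hn; exists y; auto. }
  destruct (choice _ Hbig) as [ys Hys].
  destruct (HK ys (fun n => proj1 (Hys n))) as [phi [l [Hphi [_ Hl]]]].
  destruct (seq_conv_dot _ _ _ _ Hl (seq_conv_const u) 1 ltac:(lra)) as [N HN].
  destruct (INR_unbounded (dot l u + 1)) as [m Hm].
  set (n := max N m).
  specialize (HN n ltac:(lia)); pose proof (proj2 (Hys (phi n))) as Hyn.
  assert (INR m <= INR (phi n)).
  { apply le_INR; pose proof (strict_incr_ge phi Hphi n); lia. }
  unfold Rdist in HN; apply Rabs_def2 in HN; lra.
Qed.

Lemma support_point_exists K u : nonempty K -> compact2 K -> exists x, support_point K u x.
Proof.
  intros [p Kp] HK.
  destruct (compact2_dot_bounded K u HK) as [M HM].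
  destruct (completeness (fun r => exists y, K y /\ r = dot y u)) as [S [HSub HSleast]].
  { exists M; intros r [y [Ky ->]]; apply HM, Ky. }
  { exists (dot p u), p; auto. }
  assert (Hnear : forall n : nat, exists y, K y /\ S - / (INR n + 1) < dot y u).
  { intros n; apply NNPP; intros Hn.
    enough (S <= S - / (INR n + 1)) by (pose proof (inv_succ_pos n); lra).
    apply HSleast; intros r [y [Ky ->]]; apply Rnot_lt_le; intros Hlt; apply Hn; eauto. }
  destruct (choice _ Hnear) as [ys Hys].
  destruct (HK ys (fun n => proj1 (Hys n))) as [phi [l [Hphi [Kl Hl]]]].
  exists l; split; [exact Kl|]; intros y Ky.
  apply Rle_trans with S; [apply HSub; eauto|].
  apply (@Rle_cv_lim (fun n => S - / (INR (phi n) + 1)) (fun n => dot (ys (phi n)) u)).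
  - intros n; left; apply Hys.
  - pose proof (CV_minus _ _ _ _ (Un_cv_const S) (Un_cv_subseq _ _ _ Hphi Un_cv_inv_succ))
      as Hlim.
    rewrite Rminus_0_r in Hlim; exact Hlim.
  - exact (seq_conv_dot _ _ _ _ Hl (seq_conv_const u)).
Qed.

Lemma support_point_boundary K u z : unit_vec u -> support_point K u z -> boundary K z.
Proof.
  intros Hu [Kz Hz]; split; [exact Kz|]; intros e He.
  exists (padd z (pscale (e / 2) u)); split.
  - unfold dist2, padd, pscale, unit_vec in *; cbn [fst snd] in *.
    replace ((fst z - (fst z + e / 2 * fst u)) ^ 2 + (snd z - (snd z + e / 2 * snd u)) ^ 2)
      with ((e / 2) ^ 2 * (fst u ^ 2 + snd u ^ 2)) by ring.
    rewrite Hu, Rmult_1_r, sqrt_pow2; lra.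
  - intros Kw; specialize (Hz _ Kw); unfold dot, padd, pscale, unit_vec in *; cbn [fst snd] in *.
    nra.
Qed.

Lemma support_point_segment K u x y t : convex K ->
  support_point K u x -> support_point K u y -> 0 <= t <= 1 ->
  support_point K u (padd (pscale (1 - t) x) (pscale t y)).
Proof.
  intros Hconv [Kx Hx] [Ky Hy] Ht; split; [apply Hconv; auto|]; intros w Kw.
  pose proof (Hx w Kw); pose proof (Hy x Kx); pose proof (Hx y Ky).
  unfold dot, padd, pscale in *; cbn [fst snd] in *; nra.
Qed.

Lemma support_point_unique K u x y : strictly_convex_body K -> unit_vec u ->
  support_point K u x -> support_point K u y -> x = y.
Proof.
  intros [[_ [_ Hconv]] Hstrict] Hu Sx Sy; apply NNPP; intros Hxy.
  apply Hstrict; exists x, y; split; [exact Hxy|]; intros t Ht.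
  apply (support_point_boundary K u); [exact Hu|apply support_point_segment; auto].
Qed.

Lemma middle_hedgehog_nonempty K : nonempty K -> compact2 K -> nonempty (middle_hedgehog K).
Proof.
  intros HKne HK.
  destruct (support_point_exists K (1, 0) HKne HK) as [x Sx].
  destruct (support_point_exists K (popp (1, 0)) HKne HK) as [y Sy].
  exists (pscale (1/2) (padd x y)), (1, 0), x, y.
  split; [unfold unit_vec; cbn [fst snd]; ring|auto].
Qed.

Lemma middle_hedgehog_compact K : compact2 K -> compact2 (middle_hedgehog K).
Proof.
  intros HK s Hs.
  destruct (choice _ Hs) as [us Hus]; destruct (choice _ Hus) as [xs Hxs];
    destruct (choice _ Hxs) as [ys Hys].
  destruct (compact2_subseq3 unit_vec K K us xs ys compact2_unit_circle HK HK
              (fun n => proj1 (Hys n)) (fun n => proj1 (proj1 (proj2 (Hys n))))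
              (fun n => proj1 (proj1 (proj2 (proj2 (Hys n))))))
    as [phi [u [x [y [Hphi [Hu [Kx [Ky [Hlu [Hlx Hly]]]]]]]]]].
  exists phi, (pscale (1/2) (padd x y)); split; [exact Hphi|split].
  - exists u, x, y; repeat split; auto.
    + apply (support_point_seq_limit K _ u _ x Hlu Hlx Kx); intros n; apply Hys.
    + apply (support_point_seq_limit K _ (popp u) _ y (seq_conv_popp _ _ Hlu) Hly Ky).
      intros n; apply Hys.
  - intros eps Heps; destruct (seq_conv_midpoint _ _ _ _ Hlx Hly eps Heps) as [N HN].
    exists N; intros n Hn; rewrite (proj2 (proj2 (proj2 (Hys (phi n))))); apply HN, Hn.
Qed.

Lemma support_point_hausdorff_approx K L u x' k d : unit_vec u -> hausdorff_le K L d ->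
  support_point L u x' -> dist2 k x' <= d -> forall y, K y -> dot y u <= dot k u + 2 * d.
Proof.
  intros Hu [HKL _] [_ Hx'] Hk y Ky.
  destruct (HKL y Ky) as [l [Ll Hyl]]; specialize (Hx' l Ll).
  pose proof (Rle_trans _ _ _ (dot_lipschitz y l u Hu) Hyl) as Hy.
  pose proof (Rle_trans _ _ _ (dot_lipschitz k x' u Hu) Hk) as Hk'.
  apply Rabs_le_inv in Hy; apply Rabs_le_inv in Hk'; lra.
Qed.

Lemma support_points_close K Ls us xs x's ds : strictly_convex_body K -> Un_cv ds 0 ->
  (forall n, unit_vec (us n)) -> (forall n, hausdorff_le K (Ls n) (ds n)) ->
  (forall n, support_point K (us n) (xs n)) ->
  (forall n, support_point (Ls n) (us n) (x's n)) ->
  forall e, e > 0 -> exists n, dist2 (xs n) (x's n) < e.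
Proof.
  intros HK Hds Hus HKL Sxs Sx's e He.
  pose proof HK as [[_ [HKc _]] _].
  assert (Hnear : forall n, exists k, K k /\ dist2 k (x's n) <= ds n)
    by (intros n; apply (HKL n), Sx's).
  destruct (choice _ Hnear) as [ks Hks].
  destruct (compact2_subseq3 unit_vec K K us xs ks compact2_unit_circle HKc HKc
              Hus (fun n => proj1 (Sxs n)) (fun n => proj1 (Hks n)))
    as [phi [u [x [k [Hphi [Hu [Kx [Kk [Hlu [Hlx Hlk]]]]]]]]]].
  assert (Hds' : Un_cv (fun n => ds (phi n)) 0) by exact (Un_cv_subseq _ _ _ Hphi Hds).
  assert (Sx : support_point K u x)
    by (apply (support_point_seq_limit K _ u _ x Hlu Hlx Kx); intros n; apply Sxs).
  assert (Sk : support_point K u k).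
  { apply (support_point_of_approx K _ u _ k (fun n => 2 * ds (phi n)) Hlu Hlk); auto.
    - rewrite <- (Rmult_0_r 2); apply CV_mult; [apply Un_cv_const|exact Hds'].
    - intros n; apply (support_point_hausdorff_approx K (Ls (phi n)) _ (x's (phi n)));
        [apply Hus|apply HKL|apply Sx's|apply (proj2 (Hks _))]. }
  assert (x = k) as <- by exact (support_point_unique K u x k HK Hu Sx Sk).
  destruct (Hlx (e / 3) ltac:(lra)) as [N1 HN1]; destruct (Hlk (e / 3) ltac:(lra)) as [N2 HN2].
  destruct (Hds' (e / 3) ltac:(lra)) as [N3 HN3].
  set (n := (N1 + N2 + N3)%nat); exists (phi n).
  specialize (HN1 n ltac:(lia)); specialize (HN2 n ltac:(lia)); specialize (HN3 n ltac:(lia)).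
  unfold Rdist in HN3; rewrite Rminus_0_r in HN3; apply Rabs_def2 in HN3.
  pose proof (proj2 (Hks (phi n))).
  pose proof (dist2_triangle (xs (phi n)) x (x's (phi n))).
  pose proof (dist2_triangle x (ks (phi n)) (x's (phi n))).
  rewrite dist2_sym in HN2; lra.
Qed.

Lemma support_point_stable K : strictly_convex_body K -> forall e, e > 0 ->
  exists d, d > 0 /\ forall L u x x', unit_vec u -> hausdorff_le K L d ->
    support_point K u x -> support_point L u x' -> dist2 x x' <= e.
Proof.
  intros HK e He; apply NNPP; intros Hunstable.
  assert (Hbad : forall n, exists L u x x', unit_vec u /\ hausdorff_le K L (/ (INR n + 1)) /\
            support_point K u x /\ support_point L u x' /\ e < dist2 x x').
  { intros n; apply NNPP; intros Hn; apply Hunstable.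
    exists (/ (INR n + 1)); split; [apply inv_succ_pos|].
    intros L u x x' Hu HKL Sx Sx'; apply Rnot_lt_le; intros Hlt.
    apply Hn; exists L, u, x, x'; auto. }
  destruct (choice _ Hbad) as [Ls HL]; destruct (choice _ HL) as [us Hus];
    destruct (choice _ Hus) as [xs Hxs]; destruct (choice _ Hxs) as [x's Hx's].
  destruct (support_points_close K Ls us xs x's _ HK Un_cv_inv_succ
              (fun n => proj1 (Hx's n)) (fun n => proj1 (proj2 (Hx's n)))
              (fun n => proj1 (proj2 (proj2 (Hx's n))))
              (fun n => proj1 (proj2 (proj2 (proj2 (Hx's n))))) e He) as [n Hn].
  pose proof (proj2 (proj2 (proj2 (proj2 (Hx's n))))); lra.
Qed.

Lemma middle_hedgehog_close A B r : nonempty B -> compact2 B ->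
  (forall u x x', unit_vec u -> support_point A u x -> support_point B u x' -> dist2 x x' <= r) ->
  forall m, middle_hedgehog A m -> exists m', middle_hedgehog B m' /\ dist2 m m' <= r.
Proof.
  intros HBne HB Hclose m [u [x [y [Hu [Sx [Sy ->]]]]]].
  destruct (support_point_exists B u HBne HB) as [x' Sx'].
  destruct (support_point_exists B (popp u) HBne HB) as [y' Sy'].
  exists (pscale (1/2) (padd x' y')); split; [exists u, x', y'; auto|].
  pose proof (Hclose u x x' Hu Sx Sx').
  pose proof (Hclose (popp u) y y' (unit_vec_popp u Hu) Sy Sy').
  pose proof (dist2_midpoint_le x y x' y'); lra.
Qed.

Theorem mainTheorem3 :
  (forall K, strictly_convex_body K ->
     nonempty (middle_hedgehog K) /\ compact2 (middle_hedgehog K)) /\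
  (forall K, strictly_convex_body K ->
     forall eps, eps > 0 -> exists delta, delta > 0 /\
       forall L, strictly_convex_body L -> hausdorff_le K L delta ->
         hausdorff_le (middle_hedgehog K) (middle_hedgehog L) eps).
Proof.
  split.
  - intros K [[HKne [HK _]] _].
    split; [apply middle_hedgehog_nonempty|apply middle_hedgehog_compact]; assumption.
  - intros K HK eps Heps.
    destruct (support_point_stable K HK eps Heps) as [delta [Hdelta Hstable]].
    exists delta; split; [exact Hdelta|]; intros L HL HKL.
    destruct HK as [[HKne [HK _]] _]; destruct HL as [[HLne [HL _]] _]; split.
    + apply (middle_hedgehog_close K L eps HLne HL).
      intros u x x' Hu Sx Sx'; apply (Hstable L u); assumption.
    + intros m Hm.
      destruct (middle_hedgehog_close L K eps HKne HK) with m as [m' [Hm' Hmm']]; [|exact Hm|].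
      * intros u x' x Hu Sx' Sx; rewrite dist2_sym; apply (Hstable L u); assumption.
      * exists m'; rewrite dist2_sym; auto.
Qed.
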